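(* \textsc{Maintain-Matching} takes $O(\varepsilon\Delta)$ time per update and maintains a maximal matching $\mathcal{M}_N$ of size at least $\frac{|\overline{E(C)}|}{20\varepsilon\Delta}$, with high probability, throughout a phase.
   Context: $G$ is a fully dynamic graph with maximum degree at most $\Delta$, $0<\varepsilon<1$. During a phase, a vertex set $C$ (an almost-clique) is fixed, and with high probability every vertex of $C$ has at most $5\varepsilon\Delta$ non-neighbors in $C$ throughout the phase. $\overline{E(C)}$ is the set of non-edges (pairs of distinct vertices of $C$ not joined by an edge) and $\overline{E_C(w)}$ the non-edges of $C$ incident to $w$. At the start of the phase, $\mathcal{M}_N$ is a maximal matching in the graph $(C,\overline{E(C)})$, and an array matched$[\cdot]$ records which vertices are matched. \textsc{Maintain-Matching}$(u,v)$ for an update with $u,v\in C$: if $(u,v)$ is an edge insertion (a non-edge deletion), remove $(u,v)$ from $\overline{E(C)},\overline{E_C(u)},\overline{E_C(v)}$; if $(u,v)\in\mathcal{M}_N$, remove it and unmark $u,v$; then for each $w\in\{u,v\}$ that is unmatched, scan $\overline{E_C(w)}$ and, if some non-edge $(w,x)$ has $x$ unmatched, add $(w,x)$ to $\mathcal{M}_N$ and mark $w,x$. If $(u,v)$ is an edge deletion (a non-edge insertion), add $(u,v)$ to $\overline{E(C)},\overline{E_C(u)},\overline{E_C(v)}$, and if both $u,v$ are unmatched add $(u,v)$ to $\mathcal{M}_N$ and mark them. ''With high probability'' means with probability at least $1-1/\mathrm{poly}(n)$. *)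

From HB Require Import structures.
From mathcomp Require Import all_boot all_order all_algebra.
Set Implicit Arguments. Unset Strict Implicit. Unset Printing Implicit Defensive.
Import Order.TTheory GRing.Theory Num.Theory.

Section MaintainMatching.
Variable T : finType.

Definition simple_graph (g : rel T) : Prop :=
  (forall x, ~~ g x x) /\ (forall x y, g x y = g y x).

Definition max_deg_le (g : rel T) (Delta : nat) : Prop :=
  forall x, #|[set y | g x y]| <= Delta.

(* An update of the fully dynamic graph: [ins = true] is an edge insertion
   of (u,v), [ins = false] an edge deletion of (u,v). *)
Record upd := Upd { uins : bool; uu : T; uv : T }.

Definition graph_step (g : rel T) (a : upd) : rel T :=
  fun x y => if ((x == uu a) && (y == uv a)) || ((x == uv a) && (y == uu a))
             then uins a else g x y.

Definition graph_at (g0 : rel T) (us : seq upd) (k : nat) : rel T :=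
  foldl graph_step g0 (take k us).

Definition valid_upd (g : rel T) (a : upd) : bool :=
  (uu a != uv a) && (if uins a then ~~ g (uu a) (uv a) else g (uu a) (uv a)).

Definition nonedges (g : rel T) (C : {set T}) : {set {set T}} :=
  [set [set x; y] | x in C, y in C & (x != y) && ~~ g x y].

Definition nonnbrs (g : rel T) (C : {set T}) (w : T) : {set T} :=
  [set x in C | (x != w) && ~~ g w x].

Definition is_matching (M E : {set {set T}}) : Prop :=
  M \subset E /\
  (forall e f, e \in M -> f \in M -> e != f -> [disjoint e & f]).

Definition is_maximal_matching (M E : {set {set T}}) : Prop :=
  is_matching M E /\ (forall e, e \in E -> exists2 f, f \in M & ~~ [disjoint e & f]).

(* nel w : the list overline{E_C(w)} (stored as the list of other endpoints);
   mate w : Some x if (w,x) \in M_N, None if w is unmatched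
   (matched[w] = (mate w != None)). *)
Record state := State { nel : {ffun T -> seq T}; mate : {ffun T -> option T} }.

Definition matched (s : state) (w : T) : bool := mate s w != None.

Definition matchingE (s : state) : {set {set T}} :=
  [set [set p.1; p.2] | p : T * T & mate s p.1 == Some p.2].

Definition setf (A : Type) (f : {ffun T -> A}) (a : T) (b : A) : {ffun T -> A} :=
  [ffun y => if y == a then b else f y].

(* Scan overline{E_C(w)} (if w is unmatched) for an unmatched x; match (w,x)
   for the first one found.  The returned nat is the number of list entries
   examined. *)
Definition scan (s : state) (w : T) : state * nat :=
  if matched s w then (s, 0%N) else
  let l := nel s w in
  let i := find (fun x => mate s x == None) l in
  if (i < size l)%N then
    let x := nth w l i in
    (State (nel s) (setf (setf (mate s) w (Some x)) x (Some w)), i.+1)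
  else (s, size l).

(* One call of Maintain-Matching(u,v) (only invoked when u,v \in C).
   Cost = 1 (constant work for list/matching updates) + entries scanned. *)
Definition maintain (C : {set T}) (s : state) (a : upd) : state * nat :=
  let u := uu a in let v := uv a in
  if (u \in C) && (v \in C) then
    if uins a then
      (* edge insertion = non-edge deletion *)
      let nl := setf (setf (nel s) u (rem v (nel s u))) v (rem u (nel s v)) in
      let mt := if mate s u == Some v
                then setf (setf (mate s) u None) v None else mate s in
      let r1 := scan (State nl mt) u in
      let r2 := scan r1.1 v in
      (r2.1, (1 + r1.2 + r2.2)%N)
    else
      (* edge deletion = non-edge insertion *)
      let nl := setf (setf (nel s) u (v :: nel s u)) v (u :: nel s v) in
      let mt := if (mate s u == None) && (mate s v == None)
                then setf (setf (mate s) u (Some v)) v (Some u) else mate s in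
      (State nl mt, 1%N)
  else (s, 0%N).

Definition state_at (C : {set T}) (s0 : state) (us : seq upd) (k : nat) : state :=
  foldl (fun s a => (maintain C s a).1) s0 (take k us).


Definition good_initial_state (g0 : rel T) (C : {set T}) (s0 : state) : Prop :=
  (forall w, w \in C -> uniq (nel s0 w) /\ (forall x, (x \in nel s0 w) = (x \in nonnbrs g0 C w)))
  /\ (forall w x, mate s0 w = Some x -> mate s0 x = Some w)
  /\ is_maximal_matching (matchingE s0) (nonedges g0 C).

End MaintainMatching.

(* Maintain-Matching preserves an invariant: the lists hold exactly the
   non-neighbours in C, [mate] is a symmetric partner function whose pairs are
   non-edges of C, and every non-edge of C has a matched endpoint, i.e. M_N is
   maximal.  Inserting the edge (u,v) can only uncover non-edges at u and v, and
   scanning their lists covers them again; deleting it creates the single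
   non-edge (u,v), which is matched when both ends are free.  A list has at most
   5 eps Delta entries, which bounds the time per update.  Finally every
   non-edge has one of the 2 |M_N| matched vertices as an endpoint, and each of
   them lies on at most 5 eps Delta non-edges, so |nonedges| <= 10 eps Delta |M_N|. *)

From HB Require Import structures.
From mathcomp Require Import all_boot all_order all_algebra.
From mathcomp Require Import lra.
Import Order.TTheory GRing.Theory Num.Theory.
Set Implicit Arguments. Unset Strict Implicit. Unset Printing Implicit Defensive.

Section MaintainMatching.
Variable T : finType.
Implicit Types (g : rel T) (C X : {set T}) (s : state T) (m : {ffun T -> option T}).

Lemma setfE (A : Type) (f : {ffun T -> A}) a b y :
  setf f a b y = if y == a then b else f y.
Proof. by rewrite ffunE. Qed.

Definition mate_symmetric m : Prop := forall z y, m z = Some y -> m y = Some z.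

(* The mate updates of [scan] and [maintain], named so that the lemmas below
   apply to them by conversion. *)
Definition link m w x : {ffun T -> option T} := setf (setf m w (Some x)) x (Some w).

Definition unlink m u v : {ffun T -> option T} := setf (setf m u None) v None.

Lemma linkE m w x z :
  link m w x z = if z == x then Some w else if z == w then Some x else m z.
Proof. by rewrite !setfE. Qed.

Lemma link_Some m w x z y : link m w x z = Some y ->
  [\/ m z = Some y, z = w /\ y = x | z = x /\ y = w].
Proof.
rewrite linkE; case: eqP => [-> [<-]|_]; first by constructor 3.
by case: eqP => [-> [<-]|_]; [constructor 2 | constructor 1].
Qed.

Lemma link_id m w x : link m w x w = Some x.
Proof. by rewrite linkE eqxx; case: eqP => [->|]. Qed.

Lemma link_idr m w x : link m w x x = Some w.
Proof. by rewrite linkE eqxx. Qed.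

Lemma link_keep m w x z : m w = None -> m x = None -> m z != None ->
  link m w x z = m z.
Proof.
move=> mw mx mz; rewrite linkE.
by case: eqP => [zx|_]; [rewrite zx mx in mz | case: eqP => [zw|//]; rewrite zw mw in mz].
Qed.

Lemma link_sym m w x : mate_symmetric m -> m w = None -> m x = None ->
  mate_symmetric (link m w x).
Proof.
move=> mS mw mx z y /link_Some[mz|[-> ->]|[-> ->]]; last 2 first.
- exact: link_idr.
- exact: link_id.
by have my := mS _ _ mz; rewrite link_keep // my.
Qed.

Lemma unlink_Some m u v z y : unlink m u v z = Some y ->
  [/\ m z = Some y, z != u & z != v].
Proof. by rewrite !setfE; do 2![case: eqP => // _]. Qed.

Lemma unlink_keep m u v z : z != u -> z != v -> unlink m u v z = m z.
Proof. by move=> zu zv; rewrite !setfE (negbTE zu) (negbTE zv). Qed.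

Lemma unlink_sym m u v : mate_symmetric m -> m u = Some v ->
  mate_symmetric (unlink m u v).
Proof.
move=> mS muv z y /unlink_Some[mz zu zv]; have my := mS _ _ mz.
rewrite unlink_keep //; apply/eqP => yE; subst y.
- by move: muv; rewrite my => -[] /eqP; rewrite (negbTE zv).
- by move: (mS _ _ muv); rewrite my => -[] /eqP; rewrite (negbTE zu).
Qed.

Definition upd_pair (a : upd T) x y : bool :=
  ((x == uu a) && (y == uv a)) || ((x == uv a) && (y == uu a)).

Lemma graph_stepE g a x y :
  graph_step g a x y = if upd_pair a x y then uins a else g x y.
Proof. by []. Qed.

Lemma upd_pairC a x y : upd_pair a x y = upd_pair a y x.
Proof. by rewrite /upd_pair orbC; congr orb; apply: andbC. Qed.

Lemma graph_step_sym g a : (forall x y, g x y = g y x) ->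
  forall x y, graph_step g a x y = graph_step g a y x.
Proof. by move=> gS x y; rewrite !graph_stepE upd_pairC gS. Qed.

Lemma nonnbrs_sub g C w x : x \in nonnbrs g C w -> x \in C.
Proof. by rewrite inE => /andP[]. Qed.

Lemma nonnbrs_sym g C w x : (forall x y, g x y = g y x) ->
  w \in C -> x \in nonnbrs g C w -> w \in nonnbrs g C x.
Proof.
move=> gS wC; rewrite !inE => /and3P[_ xw gwx].
by rewrite wC eq_sym xw gS gwx.
Qed.

Lemma nonnbrs_step_outside g C a w : ~~ ((uu a \in C) && (uv a \in C)) -> w \in C ->
  nonnbrs (graph_step g a) C w = nonnbrs g C w.
Proof.
move=> out wC; apply/setP => x; rewrite !inE graph_stepE.
case xC: (x \in C) => //=; case: ifP => // /orP[]/andP[/eqP wE /eqP xE].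
  by move: out; rewrite -wE -xE wC xC.
by move: out; rewrite -wE -xE wC xC.
Qed.

Definition nel_ok C g (nl : {ffun T -> seq T}) : Prop :=
  forall w, w \in C -> uniq (nl w) /\ nl w =i nonnbrs g C w.

Lemma nel_ok_insert C g nl u v : u != v -> nel_ok C g nl ->
  nel_ok C (graph_step g (Upd true u v))
           (setf (setf nl u (rem v (nl u))) v (rem u (nl v))).
Proof.
move=> uv ok w wC; rewrite !setfE.
have pairE x : upd_pair (Upd true u v) w x =
    ((w == u) && (x == v)) || ((w == v) && (x == u)) by [].
have [nl_uniq nlE] := ok w wC.
case: (eqVneq w v) => [wv|wv]; last case: (eqVneq w u) => [wu|wu].
- subst w; split=> [|x]; first exact: rem_uniq.
  rewrite (mem_rem_uniq _ nl_uniq) !inE nlE !inE graph_stepE pairE eqxx.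
  by rewrite (eq_sym v u) (negbTE uv) /=; case: (x =P u) => [->|]; rewrite ?andbF.
- subst w; split=> [|x]; first exact: rem_uniq.
  rewrite (mem_rem_uniq _ nl_uniq) !inE nlE !inE graph_stepE pairE eqxx.
  by rewrite (negbTE uv) /= orbF; case: (x =P v) => [->|]; rewrite ?andbF.
- split=> // x; rewrite nlE !inE graph_stepE pairE.
  by rewrite (negbTE wu) (negbTE wv).
Qed.

Lemma nel_ok_delete C g nl u v : (forall x y, g x y = g y x) ->
  u != v -> g u v -> u \in C -> v \in C -> nel_ok C g nl ->
  nel_ok C (graph_step g (Upd false u v))
           (setf (setf nl u (v :: nl u)) v (u :: nl v)).
Proof.
move=> gS uv guv uC vC ok w wC; rewrite !setfE.
have pairE x : upd_pair (Upd false u v) w x =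
    ((w == u) && (x == v)) || ((w == v) && (x == u)) by [].
have [nl_uniq nlE] := ok w wC.
case: (eqVneq w v) => [wv|wv]; last case: (eqVneq w u) => [wu|wu].
- subst w; split=> [|x]; first by rewrite /= nl_uniq nlE !inE gS guv !andbF.
  rewrite in_cons nlE !inE graph_stepE pairE eqxx (eq_sym v u) (negbTE uv) /=.
  by case: (x =P u) => [->|]; rewrite ?uC ?uv.
- subst w; split=> [|x]; first by rewrite /= nl_uniq nlE !inE guv !andbF.
  rewrite in_cons nlE !inE graph_stepE pairE eqxx (negbTE uv) /= orbF.
  by case: (x =P v) => [->|]; rewrite ?vC 1?eq_sym ?uv.
- split=> // x; rewrite nlE !inE graph_stepE pairE.
  by rewrite (negbTE wu) (negbTE wv).
Qed.

Lemma upd_pair_notin a x y : x \notin [set uu a; uv a] -> upd_pair a x y = false.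
Proof. by rewrite !inE negb_or /upd_pair => /andP[/negbTE -> /negbTE ->]. Qed.

(* Maximality is only required for non-edges avoiding [X], the vertices whose
   lists are still to be scanned. *)
Record invariant_except C g s X : Prop := InvariantExcept {
  inv_graph_sym : forall x y, g x y = g y x;
  inv_nel : nel_ok C g (nel s);
  inv_mate_sym : mate_symmetric (mate s);
  inv_mate_nonedge : forall w x, mate s w = Some x -> w \in C /\ x \in nonnbrs g C w;
  inv_cover : forall a b, a \notin X -> b \notin X -> a \in C -> b \in nonnbrs g C a ->
    matched s a || matched s b }.

Notation invariant C g s := (invariant_except C g s set0).

Lemma invariant_exceptD1 C g s s' X w : w \in C -> invariant_except C g s X ->
  nel s' = nel s -> mate_symmetric (mate s') ->
  (forall z y, mate s' z = Some y -> z \in C /\ y \in nonnbrs g C z) ->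
  (forall z, matched s z -> matched s' z) ->
  (forall b, b \in nonnbrs g C w -> matched s' w || matched s' b) ->
  invariant_except C g s' (X :\ w).
Proof.
move=> wC [gS nelS _ _ cov] nelE mS' mN' mono cov_w; split=> //; first by rewrite nelE.
move=> a b; rewrite !in_setD1 !negb_and !negbK => aX bX aC ab.
case: (eqVneq a w) => [aw|aw]; first by subst a; exact: cov_w.
case: (eqVneq b w) => [bw|bw].
  by subst b; rewrite orbC; apply: cov_w; apply: nonnbrs_sym.
rewrite (negbTE aw) (negbTE bw) /= in aX bX.
by case/orP: (cov a b aX bX aC ab) => /mono ->; rewrite ?orbT.
Qed.

Lemma scan_invariant C g s X w : w \in C -> invariant_except C g s X ->
  invariant_except C g (scan s w).1 (X :\ w).
Proof.
move=> wC I; have [gS nelS mS mN _] := I; have [_ nelE] := nelS w wC.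
rewrite /scan; case: ifP => [mw | /negbFE/eqP mw].
  by apply: (invariant_exceptD1 wC I) => // b _; rewrite mw.
set l := nel s w; set i := find _ l.
case: ifP => [il | il] /=; last first.
  apply: (invariant_exceptD1 wC I) => // b; rewrite -nelE => bl.
  have: ~~ has (fun x => mate s x == None) l by rewrite has_find il.
  by move/hasPn/(_ _ bl) => mb; rewrite /matched mb orbT.
set x := nth w l i.
have mx : mate s x = None.
  by apply/eqP; apply: (@nth_find _ w (fun x => mate s x == None)); rewrite has_find.
have xN : x \in nonnbrs g C w by rewrite -nelE mem_nth.
apply: (invariant_exceptD1 wC I) => //=.
- exact: link_sym.
- move=> z y /link_Some[/mN //|[-> ->]|[-> ->]] //.
  by split; [exact: nonnbrs_sub xN | exact: nonnbrs_sym].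
- by move=> z mz; rewrite /matched /= link_keep.
- by move=> b _; rewrite /matched /= link_id.
Qed.

Lemma invariant_insert C g s u v : invariant C g s -> u != v -> u \in C -> v \in C ->
  invariant C (graph_step g (Upd true u v)) (maintain C s (Upd true u v)).1.
Proof.
move=> [gS nelS mS mN cov] uv uC vC; rewrite /maintain uC vC /=.
set g' := graph_step g _; set mt := if _ then _ else _.
have g'E x y : g' x y = upd_pair (Upd true u v) x y || g x y.
  by rewrite /g' graph_stepE; case: ifP.
suff I1 : invariant_except C g' (State (setf (setf (nel s) u (rem v (nel s u))) v
                                               (rem u (nel s v))) mt) [set u; v].
  have -> : set0 = [set u; v] :\ u :\ v.
    by apply/setP => z; rewrite !inE; case: (z =P u); case: (z =P v).
  exact: scan_invariant vC (scan_invariant uC I1).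
have mt_old z y : mt z = Some y -> mate s z = Some y /\ ~~ upd_pair (Upd true u v) z y.
  rewrite /mt; case: ifP => [_ /unlink_Some[mz zu zv] | /negbT muv mz].
    by rewrite /upd_pair /= (negbTE zu) (negbTE zv).
  split=> //; apply/negP => /orP[]/andP[/eqP zu /eqP yv]; subst z y.
    by rewrite mz eqxx in muv.
  by rewrite (mS _ _ mz) eqxx in muv.
have mt_keep z : z \notin [set u; v] -> mt z = mate s z.
  by rewrite !inE negb_or => /andP[zu zv]; rewrite /mt; case: ifP => // _; apply: unlink_keep.
split=> //.
- exact: graph_step_sym.
- exact: nel_ok_insert.
- by rewrite /mt; case: ifP => [/eqP|_]; [exact: unlink_sym | exact: mS].
- move=> z y /mt_old[/mN[zC yN] not_uv]; split=> //.
  by move: yN; rewrite !inE g'E (negbTE not_uv).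
- move=> a b aX bX aC; rewrite /matched /= !mt_keep // !inE g'E upd_pair_notin //.
  by move=> bN; apply: cov; rewrite ?inE.
Qed.

Lemma invariant_delete C g s u v : invariant C g s -> u != v -> g u v ->
  u \in C -> v \in C ->
  invariant C (graph_step g (Upd false u v)) (maintain C s (Upd false u v)).1.
Proof.
move=> [gS nelS mS mN cov] uv guv uC vC; rewrite /maintain uC vC /=.
set g' := graph_step g _; set mt := if _ then _ else _.
have g'E x y : g' x y = ~~ upd_pair (Upd false u v) x y && g x y.
  by rewrite /g' graph_stepE; case: ifP.
have old_nonnbr w x : x \in nonnbrs g C w -> x \in nonnbrs g' C w.
  by rewrite !inE g'E => /and3P[-> -> /negbTE ->]; rewrite andbF.
have vN : v \in nonnbrs g' C u by rewrite !inE vC eq_sym uv g'E /upd_pair !eqxx.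
have mono z : mate s z != None -> mt z != None.
  by rewrite /mt; case: ifP => // /andP[/eqP mu /eqP mv] mz; rewrite link_keep.
have cov_uv : (mt u != None) || (mt v != None).
  by rewrite /mt; case: ifP => [_|/negbT]; rewrite ?link_id // negb_and.
split=> //.
- exact: graph_step_sym.
- exact: nel_ok_delete.
- by rewrite /mt; case: ifP => [/andP[/eqP mu /eqP mv]|_]; [exact: link_sym | exact: mS].
- move=> z y; rewrite /mt; case: ifP => [/andP[/eqP mu /eqP mv]|_]; last first.
    by move/mN => [zC /old_nonnbr].
  case/link_Some => [/mN[zC /old_nonnbr] //|[-> ->] //|[-> ->]].
  by split=> //; apply: nonnbrs_sym (graph_step_sym _ gS) uC vN.
- move=> a b _ _ aC bN; rewrite /matched /=.
  case pab: (upd_pair (Upd false u v) a b).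
    by case/orP: pab => /andP[/eqP -> /eqP ->]; rewrite // orbC.
  have {}bN : b \in nonnbrs g C a by move: bN; rewrite !inE g'E pab.
  have := cov a b (negbT (in_set0 a)) (negbT (in_set0 b)) aC bN.
  by case/orP => /mono ->; rewrite ?orbT.
Qed.

Lemma invariant_outside C g s X a : invariant_except C g s X ->
  ~~ ((uu a \in C) && (uv a \in C)) ->
  invariant_except C (graph_step g a) (maintain C s a).1 X.
Proof.
move=> [gS nelS mS mN cov] out; rewrite /maintain (negbTE out) /=.
split=> //.
- exact: graph_step_sym.
- by move=> w wC; rewrite nonnbrs_step_outside //; exact: nelS.
- by move=> w x /mN[wC xN]; rewrite nonnbrs_step_outside.
- by move=> b1 b2 b1X b2X b1C; rewrite nonnbrs_step_outside //; exact: cov.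
Qed.

Lemma invariant_step C g s a : invariant C g s -> valid_upd g a ->
  invariant C (graph_step g a) (maintain C s a).1.
Proof.
case: a => [[] u v] I /andP[/= uv valid].
all: have [/andP[uC vC]|out] := boolP ((u \in C) && (v \in C)); last exact: invariant_outside.
- exact: invariant_insert.
- exact: invariant_delete.
Qed.

Lemma invariant_at C g0 s0 us k : invariant C g0 s0 ->
  (forall us1 a us2, us = us1 ++ a :: us2 -> valid_upd (foldl (@graph_step T) g0 us1) a) ->
  k <= size us -> invariant C (graph_at g0 us k) (state_at C s0 us k).
Proof.
elim: us g0 s0 k => [|a us IH] g0 s0 [|k] I0 valid //= lt_k;
  rewrite /graph_at /state_at ?take0 //=.
apply: IH lt_k; first exact: invariant_step I0 (valid [::] a us erefl).
by move=> us1 b us2 usE; apply: (valid (a :: us1) b us2); rewrite usE.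
Qed.

Lemma scan_nel s w : nel (scan s w).1 = nel s.
Proof. by rewrite /scan; case: ifP => //; case: ifP. Qed.

Lemma scan_cost s w : (scan s w).2 <= size (nel s w).
Proof. by rewrite /scan; case: ifP => //; case: ifP. Qed.

Lemma maintain_cost C s a :
  (maintain C s a).2 <= 1 + size (nel s (uu a)) + size (nel s (uv a)).
Proof.
rewrite /maintain; case: ifP => // _; case: ifP => _ /=; last by rewrite -addnA leq_addr.
set s1 := State _ _.
have size_nel1 w : size (nel s1 w) <= size (nel s w).
  rewrite /= !setfE; case: ifP => [/eqP->|_]; first exact/size_subseq/rem_subseq.
  by case: ifP => [/eqP->|//]; exact/size_subseq/rem_subseq.
rewrite -!addnA leq_add2l; apply: leq_add; first exact: leq_trans (scan_cost _ _) _.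
by apply: leq_trans (scan_cost _ _) _; rewrite scan_nel.
Qed.

Lemma size_nel C g s X w : invariant_except C g s X -> w \in C ->
  size (nel s w) = #|nonnbrs g C w|.
Proof.
by move=> [_ nelS _ _ _] /nelS[/card_uniqP <- nelE]; apply: eq_card nelE.
Qed.

Lemma nonedgesP g C e : reflect
  (exists x y, [/\ x \in C, y \in nonnbrs g C x & e = [set x; y]]) (e \in nonedges g C).
Proof.
apply: (iffP imset2P) => [[x y xC] | [x [y [xC]]]].
  by rewrite inE => /and3P[yC xy gxy] ->; exists x, y; rewrite !inE yC eq_sym xy.
by rewrite !inE => /and3P[yC yx gxy] ->; exists x y; rewrite // inE yC eq_sym yx.
Qed.

Lemma set2_nonedges g C w x : (forall x y, g x y = g y x) ->
  [set w; x] \in nonedges g C -> w \in C /\ x \in nonnbrs g C w.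
Proof.
move=> gS /nonedgesP[a [b [aC bN wxE]]].
have ab : a != b by move: bN; rewrite !inE => /and3P[_ ba _]; rewrite eq_sym.
have wx : w != x by move: (cards2 w x); rewrite wxE cards2 ab; case: (w != x).
move: wx; have /set2P[-> | ->] : w \in [set a; b] by rewrite -wxE set21.
all: have /set2P[-> | ->] : x \in [set a; b] by rewrite -wxE set22.
all: rewrite ?eqxx // => _.
by split; [exact: nonnbrs_sub bN | exact: nonnbrs_sym].
Qed.

Lemma mem_matchingE s w x : mate s w = Some x -> [set w; x] \in matchingE s.
Proof. by move=> mw; apply/imsetP; exists (w, x); rewrite ?inE /= ?mw. Qed.

Lemma matchingE_mate s e z : mate_symmetric (mate s) -> e \in matchingE s -> z \in e ->
  exists2 z', mate s z = Some z' & e = [set z; z'].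
Proof.
move=> mS /imsetP[[w x]]; rewrite inE /= => /eqP mw ->.
by case/set2P => ->; [exists x | exists w; rewrite ?(mS _ _ mw) // setUC].
Qed.

Lemma invariant_maximal_matching C g s : invariant C g s ->
  is_maximal_matching (matchingE s) (nonedges g C).
Proof.
move=> [_ _ mS mN cov].
have meets_mate z : mate s z != None -> exists2 f, f \in matchingE s & z \in f.
  by case mz: (mate s z) => [z'|] // _; exists [set z; z']; rewrite ?set21 ?mem_matchingE.
split; [split|].
- apply/subsetP => e /imsetP[[w x]]; rewrite inE /= => /eqP/mN[wC xN] ->.
  by apply/nonedgesP; exists w, x.
- move=> e f eM fM ef; rewrite -setI_eq0; apply/set0Pn => -[z]; rewrite inE => /andP[ze zf].
  have [z' mz eE] := matchingE_mate mS eM ze.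
  have [z'' mz' fE] := matchingE_mate mS fM zf.
  by move: ef; rewrite eE fE; move: mz; rewrite mz' => -[->]; rewrite eqxx.
- move=> e /nonedgesP[x [y [xC yN ->]]].
  have [z [ze /meets_mate[f fM zf]]] : exists z, z \in [set x; y] /\ mate s z != None.
    have := cov x y (negbT (in_set0 x)) (negbT (in_set0 y)) xC yN.
    by case/orP => mz; [exists x; rewrite set21 | exists y; rewrite set22].
  by exists f => //; apply/negP => /disjointFr/(_ ze); rewrite zf.
Qed.

Lemma invariant_init g0 C s0 : simple_graph g0 -> good_initial_state g0 C s0 ->
  invariant C g0 s0.
Proof.
move=> [_ gS] [nel0 [mS [[/subsetP sub _] maximal]]]; split=> //.
- by move=> w x /mem_matchingE/sub/(set2_nonedges gS).
- move=> a b _ _ aC bN.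
  have /maximal[f fM] : [set a; b] \in nonedges g0 C by apply/nonedgesP; exists a, b.
  case/pred0Pn => z /andP[zab zf]; have [z' mz _] := matchingE_mate mS fM zf.
  by case/set2P: zab => <-; rewrite /matched mz ?orbT.
Qed.

Lemma leq_card_bigcup (I U : finType) (P : pred I) (F : I -> {set U}) :
  #|\bigcup_(i | P i) F i| <= \sum_(i | P i) #|F i|.
Proof.
elim/big_ind2: _ => [|A1 n1 A2 n2 le1 le2|//]; first by rewrite cards0.
by rewrite cardsU; apply: leq_trans (leq_subr _ _) (leq_add le1 le2).
Qed.

Lemma card_nonedges_le C g s : invariant C g s ->
  #|nonedges g C| <= \sum_(w | matched s w) #|nonnbrs g C w|.
Proof.
move=> [gS _ _ _ cov].
pose star w := [set [set w; x] | x in nonnbrs g C w].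
apply: (@leq_trans #|\bigcup_(w | matched s w) star w|); last first.
  apply: leq_trans (leq_card_bigcup _ _) _.
  by apply: leq_sum => w _; apply: leq_imset_card.
apply/subset_leq_card/subsetP => e /nonedgesP[x [y [xC yN ->]]].
case/orP: (cov x y (negbT (in_set0 x)) (negbT (in_set0 y)) xC yN) => mxy; apply/bigcupP.
  by exists x => //; apply: imset_f.
by exists y; rewrite // setUC; apply/imset_f/nonnbrs_sym.
Qed.

Lemma card_matched_le s : #|matched s| <= 2 * #|matchingE s|.
Proof.
apply: (@leq_trans #|cover (matchingE s)|).
  apply/subset_leq_card/subsetP => w; rewrite unfold_in /matched.
  case mw: (mate s w) => [x|] // _; apply/bigcupP.
  by exists [set w; x]; rewrite ?set21 ?mem_matchingE.
apply: leq_trans (leq_card_cover _).1 _; rewrite mulnC -sum_nat_const.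
by apply: leq_sum => e /imsetP[p _ ->]; rewrite cards2; case: (_ != _).
Qed.

Local Open Scope ring_scope.

Lemma maintain_cost_ler (R : realDomainType) C g s a (B : R) : invariant C g s ->
  0 <= B -> (forall w, w \in C -> #|nonnbrs g C w|%:R <= B) ->
  (maintain C s a).2%:R <= 1 + 2 * B.
Proof.
move=> I B0 few; have [/andP[uC vC]|out] := boolP ((uu a \in C) && (uv a \in C)).
  apply: le_trans (_ : (1 + size (nel s (uu a)) + size (nel s (uv a)))%:R <= _).
    by rewrite ler_nat maintain_cost.
  by rewrite !natrD (size_nel I uC) (size_nel I vC); have := few _ uC; have := few _ vC; lra.
by rewrite /maintain (negbTE out) /=; lra.
Qed.

Lemma card_nonedges_ler (R : realDomainType) C g s (B : R) : invariant C g s ->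
  0 <= B -> (forall w, w \in C -> #|nonnbrs g C w|%:R <= B) ->
  #|nonedges g C|%:R <= (2 * #|matchingE s|)%:R * B.
Proof.
move=> I B0 few.
apply: le_trans (_ : (\sum_(w | matched s w) #|nonnbrs g C w|)%:R <= _).
  by rewrite ler_nat card_nonedges_le.
rewrite natr_sum; apply: le_trans (_ : \sum_(w | matched s w) B <= _).
  apply: ler_sum => w; rewrite /matched; case mw: (mate s w) => [x|] // _.
  exact/few/(inv_mate_nonedge I mw).1.
rewrite sumr_const -[B *+ _]mulr_natl; apply: ler_wpM2r => //.
by rewrite ler_nat; apply: card_matched_le.
Qed.

End MaintainMatching.

Local Open Scope ring_scope.

Theorem lemma12 :
  exists c : nat,
  forall (R : realFieldType) (T : finType) (eps : R) (Delta : nat)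
         (C : {set T}) (g0 : rel T) (us : seq (upd T)) (s0 : state T),
    0 < eps < 1 ->
    simple_graph g0 ->
    (* a fully dynamic graph of maximum degree at most Delta *)
    (forall us1 a us2, us = us1 ++ a :: us2 ->
       valid_upd (foldl (@graph_step T) g0 us1) a) ->
    (forall k, (k <= size us)%N -> max_deg_le (graph_at g0 us k) Delta) ->
    (* the (high-probability) event: every vertex of C has at most
       5 eps Delta non-neighbours in C throughout the phase *)
    (forall k w, (k <= size us)%N -> w \in C ->
       (#|nonnbrs (graph_at g0 us k) C w|)%:R <= 5 * eps * Delta%:R) ->
    (* start of the phase: correct lists and a maximal matching M_N *)
    good_initial_state g0 C s0 ->
    (* time per update is O(eps Delta) *)
    (forall us1 a us2, us = us1 ++ a :: us2 ->
       ((maintain C (state_at C s0 us (size us1)) a).2)%:R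
         <= c%:R * (eps * Delta%:R + 1)) /\
    (* M_N is a maximal matching of (C, nonedges) of the stated size *)
    (forall k, (k <= size us)%N ->
       is_maximal_matching (matchingE (state_at C s0 us k))
                           (nonedges (graph_at g0 us k) C) /\
       (#|nonedges (graph_at g0 us k) C|)%:R / (20 * eps * Delta%:R)
         <= (#|matchingE (state_at C s0 us k)|)%:R).
Proof.
exists 10%N => R T eps Delta C g0 us s0 /andP[eps0 _] simple valid _ few_nonnbrs init.
have inv k (le_k : (k <= size us)%N) := invariant_at (invariant_init simple init) valid le_k.
have eDelta0 : 0 <= eps * Delta%:R by apply: mulr_ge0; [exact: ltW | exact: ler0n].
have B0 : 0 <= 5 * eps * Delta%:R by rewrite -mulrA mulr_ge0.
split=> [us1 a us2 usE | k le_k].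
  have le_k : (size us1 <= size us)%N by rewrite usE size_cat leq_addr.
  have := maintain_cost_ler a (inv _ le_k) B0 (few_nonnbrs _ ^~ le_k).
  lra.
split; first exact: invariant_maximal_matching (inv k le_k).
have := card_nonedges_ler (inv k le_k) B0 (few_nonnbrs k ^~ le_k).
have [->|Delta_gt0] := posnP Delta; first by rewrite !mulr0 invr0 mulr0.
rewrite natrM ler_pdivrMr ?mulr_gt0 ?ltr0n //.
have : 0 <= (#|matchingE (state_at C s0 us k)|)%:R :> R by [].
nra.
Qed.
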